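(* Let $A$ be a separable Banach algebra with $A^2=A$ and $\Phi_A\neq\emptyset$. Then $\inf\{\|\phi\|:\phi\in\Phi_A\}>0$.
   Context: $A^2$ denotes the linear span of all products $ab$, $a,b\in A$. $\Phi_A$ is the set of nonzero multiplicative linear functionals (characters) on $A$, and $\|\phi\|$ is the norm of $\phi$ as a functional on $A$. *)

From HB Require Import structures.
From mathcomp Require Import all_boot all_order all_algebra.
From mathcomp Require Import all_classical all_reals all_analysis.
From mathcomp Require Import complex.
Set Implicit Arguments. Unset Strict Implicit. Unset Printing Implicit Defensive.
Import Order.TTheory GRing.Theory Num.Theory.
Import numFieldNormedType.Exports.
Local Open Scope classical_set_scope.
Local Open Scope ring_scope.

Definition banach_algebra_mul (R : realType) (V : completeNormedModType R[i])
    (mul : V -> V -> V) : Prop :=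
  [/\ forall a b c : V, mul a (mul b c) = mul (mul a b) c,
      forall (k : R[i]) (a b c : V), mul (k *: a + b) c = k *: mul a c + mul b c,
      forall (k : R[i]) (a b c : V), mul a (k *: b + c) = k *: mul a b + mul a c
    & forall a b : V, `|mul a b| <= `|a| * `|b| ].

Definition sq_span (R : realType) (V : completeNormedModType R[i])
    (mul : V -> V -> V) : set V :=
  [set x | exists (n : nat) (c : 'I_n -> R[i]) (a b : 'I_n -> V),
             x = \sum_(i < n) c i *: mul (a i) (b i)].

Definition separable (T : topologicalType) : Prop :=
  exists D : set T, countable D /\ dense D.

Definition is_character (R : realType) (V : completeNormedModType R[i])
    (mul : V -> V -> V) (phi : V -> R[i]) : Prop :=
  [/\ forall (k : R[i]) (x y : V), phi (k *: x + y) = k * phi x + phi y,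
      forall x y : V, phi (mul x y) = phi x * phi y
    & exists x : V, phi x != 0].

Definition functional_norm (R : realType) (V : completeNormedModType R[i])
    (phi : V -> R[i]) : \bar R :=
  ereal_sup [set (complex.Re `|phi x|)%:E | x in [set x : V | `|x| <= 1]].

From HB Require Import structures.
From mathcomp Require Import all_boot all_order all_algebra.
From mathcomp Require Import all_classical all_reals all_analysis.
From mathcomp Require Import complex.
From mathcomp Require Import ring lra.
Import Order.TTheory GRing.Theory Num.Theory.
Import numFieldNormedType.Exports.
Local Open Scope classical_set_scope.
Local Open Scope ring_scope.
Set Implicit Arguments. Unset Strict Implicit. Unset Printing Implicit Defensive.

(* Write A as the union over m of the sets S_m of sums of at most m products
   of factors of norm at most m.  By Baire's theorem the closure of some S_m
   contains a ball B(x0, r).  A character phi of norm N is bounded by m^3 N^2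
   on S_m, hence on its closure, hence on B(x0, r); rescaling the unit ball
   into B(x0, r) gives N r / 2 <= 2 m^3 N^2, and since N > 0 this forces
   N >= r / (4 (m^3 + 1)): a bound that does not depend on phi. *)

Section RealNorm.
Variable R : realType.

(* Norms over the scalars R[i] take values in R[i]; their real parts carry the
   order structure needed by [lra]. *)
Definition rnorm {V : normedZmodType R[i]} (x : V) : R := complex.Re `|x|.

Section NormedZmod.
Variable V : normedZmodType R[i].
Implicit Types x y : V.

Lemma normr_rnorm x : `|x| = (rnorm x)%:C%C.
Proof. by rewrite RRe_real // ger0_real. Qed.

Lemma rnorm_ge0 x : 0 <= rnorm x.
Proof. by have := normr_ge0 x; rewrite lecE => /andP[]. Qed.

Lemma rnorm_gt0 x : (0 < rnorm x) = (x != 0).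
Proof. by rewrite -normr_gt0 normr_rnorm ltcR. Qed.

Lemma rnorm0 : rnorm (0 : V) = 0.
Proof. by rewrite /rnorm normr0. Qed.

Lemma rnormN x : rnorm (- x) = rnorm x.
Proof. by rewrite /rnorm normrN. Qed.

Lemma rnormB x y : rnorm (x - y) = rnorm (y - x).
Proof. by rewrite /rnorm distrC. Qed.

Lemma rnormD x y : rnorm (x + y) <= rnorm x + rnorm y.
Proof. by have := ler_normD x y; rewrite lecE !raddfD => /andP[]. Qed.

End NormedZmod.

Lemma rnormZ (V : normedModType R[i]) (k : R[i]) (x : V) :
  rnorm (k *: x) = rnorm k * rnorm x.
Proof. by rewrite /rnorm normrZ (normr_rnorm k) (normr_rnorm x) -rmorphM. Qed.

Lemma ball_rnormE (V : normedModType R[i]) (x : V) (r : R) y :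
  ball x r%:C%C y = (rnorm (x - y) < r).
Proof. by rewrite -ball_normE /ball_ /= normr_rnorm ltcR. Qed.

Lemma closure_rnormP (V : normedModType R[i]) (A : set V) y :
  closure A y <-> forall e : R, 0 < e -> exists2 s, A s & rnorm (y - s) < e.
Proof.
split=> [yA e e_gt0 | yA B /nbhs_ballP[e e_gt0 yeB]].
  have /nbhsx_ballx/yA[s [As]] : 0 < e%:C%C by rewrite ltcR.
  by rewrite ball_rnormE; exists s.
have eE : e = (complex.Re e)%:C%C by rewrite RRe_real // gtr0_real.
have [|s As ys] := yA (complex.Re e); first by rewrite -ltcR -eE.
by exists s; split => //; apply: yeB; rewrite eE ball_rnormE.
Qed.

Lemma rnormM (z w : R[i]) : rnorm (z * w) = rnorm z * rnorm w.
Proof. by rewrite /rnorm normrM (normr_rnorm z) (normr_rnorm w) -rmorphM. Qed.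

Lemma rnormC (a : R) : rnorm a%:C%C = `|a|.
Proof. by rewrite /rnorm normc_def /= expr0n /= addr0 sqrtr_sqr. Qed.

Lemma rnorm_sum n (F : 'I_n -> R[i]) :
  rnorm (\sum_(i < n) F i) <= \sum_(i < n) rnorm (F i).
Proof.
elim/big_ind2: _ => [|z1 r1 z2 r2 le1 le2|//]; first by rewrite rnorm0.
exact: le_trans (rnormD _ _) (lerD le1 le2).
Qed.

End RealNorm.

Section LinearFunctional.
Variables (R : realType) (V : completeNormedModType R[i]) (phi : V -> R[i]).
Hypothesis phi_linear :
  forall (k : R[i]) (x y : V), phi (k *: x + y) = k * phi x + phi y.

Lemma phiD x y : phi (x + y) = phi x + phi y.
Proof. by have := phi_linear 1 x y; rewrite scale1r mul1r. Qed.

Lemma phi0 : phi 0 = 0.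
Proof. by apply: (@addrI _ (phi 0)); rewrite -phiD !addr0. Qed.

Lemma phiZ k x : phi (k *: x) = k * phi x.
Proof. by rewrite -[k *: x]addr0 phi_linear phi0 addr0. Qed.

Lemma phi_sum n (F : 'I_n -> V) : phi (\sum_(i < n) F i) = \sum_(i < n) phi (F i).
Proof. exact: (big_morph phi phiD phi0). Qed.

Lemma functional_norm_ub x :
  rnorm x <= 1 -> ((rnorm (phi x))%:E <= functional_norm phi)%E.
Proof.
move=> x_le1; apply: ereal_sup_ubound; exists x => //=.
by rewrite normr_rnorm -[1]/(1%:C%C) lecR.
Qed.

Lemma functional_norm_ge0 : (0 <= functional_norm phi)%E.
Proof. by have := @functional_norm_ub 0; rewrite phi0 !rnorm0; apply. Qed.

Lemma functional_norm_le M :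
  (forall x, rnorm x <= 1 -> rnorm (phi x) <= M) -> (functional_norm phi <= M%:E)%E.
Proof.
move=> phi_le; apply: ge_ereal_sup => _ [x /= x_le1 <-].
by rewrite lee_fin phi_le // -lecR -normr_rnorm.
Qed.

Lemma rnorm_functional_le N x :
  functional_norm phi = N%:E -> rnorm (phi x) <= N * rnorm x.
Proof.
move=> phiN; have [->|x_neq0] := eqVneq x 0; first by rewrite phi0 !rnorm0 mulr0.
have x_gt0 : 0 < rnorm x by rewrite rnorm_gt0.
have := @functional_norm_ub ((rnorm x)^-1%:C%C *: x).
rewrite phiN lee_fin phiZ rnormM !rnormZ !rnormC gtr0_norm ?invr_gt0 //.
rewrite mulVf ?gt_eqF // => /(_ (lexx _)).
by rewrite mulrC -ler_pdivlMr ?invr_gt0 // invrK.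
Qed.

End LinearFunctional.

Section BoundedProducts.
Variables (R : realType) (V : completeNormedModType R[i]) (mul : V -> V -> V).

Definition bounded_products (m : nat) : set V :=
  [set x | exists n (a b : 'I_n -> V),
     [/\ (n <= m)%N, forall i, rnorm (a i) <= m%:R, forall i, rnorm (b i) <= m%:R
       & x = \sum_(i < n) mul (a i) (b i)]].

Lemma sq_span_bounded_products :
  (forall (k : R[i]) (a b : V), mul (k *: a) b = k *: mul a b) ->
  sq_span mul `<=` \bigcup_m bounded_products m.
Proof.
move=> mulZl _ [n [c [a [b ->]]]].
pose a' i := c i *: a i.
pose M := \sum_(i < n) (rnorm (a' i) + rnorm (b i)).
have le_M i : rnorm (a' i) + rnorm (b i) <= M.
  rewrite /M (bigD1 i) //= lerDl; apply: sumr_ge0 => j _.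
  by rewrite addr_ge0 ?rnorm_ge0.
pose m := maxn n (Num.Def.truncn M).+1.
have M_le : M <= m%:R.
  by apply: le_trans (ltW (truncnS_gt M)) _; rewrite ler_nat leq_maxr.
exists m => //; exists n, a', b; split => [|i|i|]; first exact: leq_maxl.
- by have := le_M i; have := rnorm_ge0 (b i); lra.
- by have := le_M i; have := rnorm_ge0 (a' i); lra.
- by apply: eq_bigr => i _; rewrite mulZl.
Qed.

Section Character.
Variables (phi : V -> R[i]) (N : R).
Hypotheses (phi_char : is_character mul phi) (phiN : functional_norm phi = N%:E).

Let phi_linear : forall (k : R[i]) (x y : V), phi (k *: x + y) = k * phi x + phi y :=
  let: And3 lin _ _ := phi_char in lin.

Let N_ge0 : 0 <= N.
Proof. by have := functional_norm_ge0 phi_linear; rewrite phiN lee_fin. Qed.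

Lemma character_bounded_products m s :
  bounded_products m s -> rnorm (phi s) <= m%:R ^+ 3 * N ^+ 2.
Proof.
move=> [n [a [b [n_le_m a_le b_le ->]]]].
have [_ phiM _] := phi_char.
have phi_le x : rnorm x <= m%:R -> rnorm (phi x) <= N * m%:R.
  move=> x_le; apply: le_trans (rnorm_functional_le phi_linear x phiN) _.
  exact: ler_wpM2l.
rewrite phi_sum //; apply: le_trans (rnorm_sum _) _.
apply: (@le_trans _ _ (\sum_(i < n) (N * m%:R) ^+ 2)).
  apply: ler_sum => i _; rewrite phiM rnormM expr2.
  by apply: ler_pM; rewrite ?rnorm_ge0 ?phi_le.
rewrite sumr_const card_ord -[_ *+ n]mulr_natl.
have -> : m%:R ^+ 3 * N ^+ 2 = m%:R * (N * m%:R) ^+ 2 :> R by ring.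
by rewrite ler_wpM2r ?sqr_ge0 // ler_nat.
Qed.

Lemma character_closure_bounded_products m y :
  closure (bounded_products m) y -> rnorm (phi y) <= m%:R ^+ 3 * N ^+ 2.
Proof.
move=> /closure_rnormP y_cl; apply/ler_addgt0Pr => e e_gt0.
have N1_gt0 : 0 < N + 1 by have := N_ge0; lra.
have [s Ss ys] := y_cl (e / (N + 1)) (divr_gt0 e_gt0 N1_gt0).
rewrite -(subrK s y) phiD //; apply: le_trans (rnormD _ _) _.
rewrite addrC lerD ?character_bounded_products //.
apply: le_trans (rnorm_functional_le phi_linear _ phiN) _.
rewrite ltr_pdivlMr // in ys; have := rnorm_ge0 (y - s); nra.
Qed.

End Character.
End BoundedProducts.

Section Baire.
Variables (R : realType) (V : completeNormedModType R[i]).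

Lemma nested_balls_meet (x : nat -> V) (r : nat -> R) :
  (forall k, 0 <= r k) ->
  (forall k, rnorm (x k.+1 - x k) + r k.+1 <= r k) ->
  (forall k, r k <= k.+1%:R^-1) ->
  exists l, forall k, rnorm (l - x k) <= r k.
Proof.
move=> r_ge0 r_nested r_small.
have nest k d : rnorm (x (k + d)%N - x k) + r (k + d)%N <= r k.
  elim: d => [|d IH]; first by rewrite addn0 subrr rnorm0 add0r.
  rewrite addnS; have := r_nested (k + d)%N.
  have := rnormD (x (k + d).+1 - x (k + d)%N) (x (k + d)%N - x k).
  rewrite addrA subrK; lra.
have x_cvg : cvg (x @ \oo).
  apply: cauchy_cvg; apply: cauchy_exP => e e_gt0.
  have eE : e = (complex.Re e)%:C%C by rewrite RRe_real // gtr0_real.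
  have Re_gt0 : 0 < complex.Re e by rewrite -ltcR -eE.
  pose k := Num.Def.truncn (complex.Re e)^-1.
  have k_small : k.+1%:R^-1 < complex.Re e.
    by rewrite -ltf_pV2 ?posrE ?invr_gt0 // invrK truncnS_gt.
  exists (x k), k => // j /= k_le_j.
  rewrite eE ball_rnormE rnormB -(subnKC k_le_j).
  apply: le_lt_trans k_small; apply: le_trans (r_small k).
  by have := nest k (j - k)%N; have := r_ge0 (k + (j - k))%N; lra.
have /cvg_ex[l x_l] := x_cvg.
exists l => k; apply/ler_addgt0Pr => e e_gt0.
have /(cvgrPdist_lt _ _).1 : x @ \oo --> l := x_l.
move=> /(_ e%:C%C); rewrite ltcR => /(_ e_gt0) [j _ near_l].
have := near_l (k + j)%N (leq_addl _ _); rewrite /= normr_rnorm ltcR => l_near.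
have := nest k j; have := r_ge0 (k + j)%N.
have := rnormD (l - x (k + j)%N) (x (k + j)%N - x k); rewrite addrA subrK; lra.
Qed.

Lemma ball_avoiding (A : set V) (x : V) (r d : R) :
  0 < d -> ~ (ball x r%:C%C `<=` closure A) ->
  exists y (e : R), [/\ 0 < e, rnorm (y - x) + e <= r, e <= d
    & forall z, rnorm (z - y) <= e -> ~ A z].
Proof.
move=> d_gt0 /existsNP[y /not_implyP[]]; rewrite ball_rnormE rnormB => xy.
move=> /closure_rnormP y_out.
have [eps eps_gt0 far] : exists2 eps, 0 < eps & forall s, A s -> eps <= rnorm (y - s).
  apply: contrapT => near; apply: y_out => eps eps_gt0; apply: contrapT => no_s.
  apply: near; exists eps => // s As; rewrite leNgt; apply/negP => ys.
  by apply: no_s; exists s.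
pose e := Num.min (eps / 2) (Num.min (r - rnorm (y - x)) d).
have e_gt0 : 0 < e by rewrite !lt_min divr_gt0 //= subr_gt0 xy.
have e_le : [/\ e <= eps / 2, e <= r - rnorm (y - x) & e <= d].
  by rewrite !ge_min !lexx !orbT.
have [e_le1 e_le2 e_le3] := e_le.
exists y, e; split => // [|z zy Az]; first lra.
by have := far z Az; rewrite rnormB; lra.
Qed.

Theorem Baire_cover (S : nat -> set V) : (forall x, exists m, S m x) ->
  exists m (x0 : V) (r : R), 0 < r /\ ball x0 r%:C%C `<=` closure (S m).
Proof.
move=> S_cover; apply: contrapT => no_ball.
have step (mxr : nat * (V * R)) : exists ye : V * R, 0 < mxr.2.2 ->
    [/\ 0 < ye.2, rnorm (ye.1 - mxr.2.1) + ye.2 <= mxr.2.2, ye.2 <= mxr.1.+2%:R^-1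
      & forall z, rnorm (z - ye.1) <= ye.2 -> ~ S mxr.1 z].
  (* the guard [0 < r] makes the step total; it holds along the iteration *)
  case: mxr => m [x r] /=; have [r_gt0|r_le0] := ltP 0 r; last first.
    by exists (x, r).
  have no_sub : ~ (ball x r%:C%C `<=` closure (S m)).
    by move=> sub; apply: no_ball; exists m, x, r.
  have d_gt0 : 0 < m.+2%:R^-1 :> R by rewrite invr_gt0.
  have [y [e ye]] := ball_avoiding d_gt0 no_sub.
  by exists (y, e).
have [f f_step] := choice step.
pose g := fix g n : V * R := if n is k.+1 then f (k, g k) else (0, 1).
have r_gt0 k : 0 < (g k).2.
  by elim: k => [|k IH]; [exact: ltr01 | have [] := f_step (k, g k) IH].
have g_step k := f_step (k, g k) (r_gt0 k).
have [|||l l_in] := @nested_balls_meet (fun k => (g k).1) (fun k => (g k).2).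
- by move=> k; exact/ltW.
- by move=> k; have [] := g_step k.
- by case=> [|k]; [rewrite invr1 | have [] := g_step k].
have [m Sml] := S_cover l.
by have [_ _ _ avoid] := g_step m; exact: avoid l (l_in m.+1) Sml.
Qed.

End Baire.

Lemma banach_algebra_mulZl (R : realType) (V : completeNormedModType R[i])
    (mul : V -> V -> V) :
  banach_algebra_mul mul ->
  forall (k : R[i]) (a b : V), mul (k *: a) b = k *: mul a b.
Proof.
case=> _ mulDl _ _ k a b.
have mul0l : mul 0 b = 0.
  have := mulDl 1 0 0 b; rewrite !scale1r !addr0 => mul0_twice.
  by apply: (@addrI _ (mul 0 b)); rewrite -mul0_twice addr0.
by rewrite -[k *: a]addr0 mulDl mul0l addr0.
Qed.

Lemma character_functional_norm_ge (R : realType) (V : completeNormedModType R[i])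
    (mul : V -> V -> V) (phi : V -> R[i]) (m : nat) (x0 : V) (r : R) :
  is_character mul phi -> 0 < r ->
  ball x0 r%:C%C `<=` closure (bounded_products mul m) ->
  ((r / (4 * (m%:R ^+ 3 + 1)))%:E <= functional_norm phi)%E.
Proof.
move=> phi_char r_gt0 ball_sub; have [phi_linear _ [x phix_neq0]] := phi_char.
case phiN : (functional_norm phi) => [N| |]; last 2 first.
- exact: leey.
- by have := functional_norm_ge0 phi_linear; rewrite phiN.
set K : R := m%:R ^+ 3.
have N_gt0 : 0 < N.
  have := rnorm_functional_le phi_linear x phiN.
  have := rnorm_ge0 x; rewrite -rnorm_gt0 in phix_neq0; nra.
have on_ball y : ball x0 r%:C%C y -> rnorm (phi y) <= K * N ^+ 2.
  by move/ball_sub; apply: character_closure_bounded_products.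
have on_unit_ball y : rnorm y <= 1 -> rnorm (phi y) <= 4 * K * N ^+ 2 / r.
  move=> y_le1; pose y' := x0 + (r / 2)%:C%C *: y.
  have r2_ge0 : 0 <= r / 2 by rewrite divr_ge0 // ltW.
  have y'_ball : ball x0 r%:C%C y'.
    rewrite ball_rnormE rnormB /y' addrC addKr rnormZ rnormC ger0_norm //; nra.
  have x0_ball : ball x0 r%:C%C x0 by rewrite ball_rnormE subrr rnorm0.
  have shift : phi y' - phi x0 = (r / 2)%:C%C * phi y.
    by rewrite /y' phiD // phiZ // addrC addKr.
  have := rnormD (phi y') (- phi x0); rewrite shift rnormN rnormM rnormC ger0_norm //.
  have := on_ball _ y'_ball; have := on_ball _ x0_ball.
  by rewrite ler_pdivlMr //; nra.
have := functional_norm_le on_unit_ball.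
rewrite phiN !lee_fin ler_pdivlMr // ler_pdivrMr => [N_le|]; last first.
  by rewrite mulr_gt0 // ltr_wpDl ?exprn_ge0.
have : 0 <= K by rewrite exprn_ge0.
nra.
Qed.

Theorem proposition3p10 (R : realType) (V : completeNormedModType R[i])
    (mul : V -> V -> V) :
  banach_algebra_mul mul ->
  separable V ->
  sq_span mul = [set: V] ->
  (exists phi : V -> R[i], is_character mul phi) ->
  (0 < ereal_inf [set functional_norm phi | phi in [set phi | is_character mul phi]])%E.
Proof.
(* Baire's theorem needs completeness only, and an empty infimum is +oo. *)
move=> mul_banach _ mul_sq _.
have cover x : exists m, bounded_products mul m x.
  have : sq_span mul x by rewrite mul_sq.
  move/(sq_span_bounded_products (banach_algebra_mulZl mul_banach)).
  by move=> [m _]; exists m.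
have [m [x0 [r [r_gt0 ball_sub]]]] := Baire_cover cover.
apply: (@lt_le_trans _ _ (r / (4 * (m%:R ^+ 3 + 1)))%:E).
  by rewrite lte_fin divr_gt0 // mulr_gt0 // ltr_wpDl ?exprn_ge0.
apply: le_ereal_inf_tmp => _ [phi phi_char <-].
exact: character_functional_norm_ge phi_char r_gt0 ball_sub.
Qed.
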